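(* Let $\alpha\in\mathbb{R}$, $\beta\in(0,1)$ and $\sigma\in\mathbb{R}\setminus\{0,1\}$. Let $J\subset(0,\infty)$ be an open interval such that $1+\alpha\sigma q>0$ and $|\alpha\sigma q|<1$ for all $q\in J$. Let $u:J\to\mathbb{R}$ be twice differentiable with $u'(q)>0$ for all $q\in J$. Then $u$ has linear fractional relative risk aversion on $J$, i.e. $$-\frac{q\,u''(q)}{u'(q)}=\frac{\alpha q+\beta}{\alpha\sigma q+1}\quad\text{for all } q\in J,$$ if and only if there exist constants $K>0$ and $C\in\mathbb{R}$ such that for all $q\in J$ $$u(q)=\frac{K\sigma}{\sigma-1}\,(1+\alpha\sigma q)^{\beta-\frac{1}{\sigma}}\,q^{1-\beta}\left[1+\frac{\beta-\frac{1}{\sigma}}{1-\beta}\;{}_2F_1\!\left(1-\tfrac{1}{\sigma},\,1;\,2-\beta;\,-\alpha\sigma q\right)\right]+C .$$ In this case $u'(q)=K(1+\alpha\sigma q)^{\beta-\frac1\sigma}q^{-\beta}$.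
   Context: ${}_2F_1(a,b;c;z)=\sum_{n=0}^\infty\frac{(a)_n(b)_n}{(c)_n}\frac{z^n}{n!}$ for $|z|<1$ is the Gauss hypergeometric function, where $(a)_n=a(a+1)\cdots(a+n-1)$, $(a)_0=1$, is the rising Pochhammer symbol. All real powers of positive reals are the real (principal) ones. *)

From Stdlib Require Import Reals Arith.
From Coquelicot Require Import Coquelicot.
Open Scope R_scope.

Fixpoint poch (a : R) (n : nat) : R :=
  match n with
  | O => 1
  | S k => poch a k * (a + INR k)
  end.

(* Gauss hypergeometric function 2F1(a,b;c;z) as the sum of its power series
   (used only for |z| < 1, where the series converges). *)
Definition hyp2F1 (a b c z : R) : R :=
  Series (fun n => poch a n * poch b n / poch c n * z ^ n / INR (fact n)).

Definition in_open_interval (a b : Rbar) (q : R) : Prop :=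
  Rbar_lt a q /\ Rbar_lt q b.

(* Writing [r(q) = (alpha q + beta) / (alpha sigma q + 1)], the marginal utility
   [mu(q) = (1 + alpha sigma q)^(beta - 1/sigma) q^(-beta)] solves [q mu' = - r mu], so the
   relative risk aversion equation says exactly that [u'] and [mu] have the same logarithmic
   derivative, i.e. [u' = K mu] on the interval.  It remains to integrate [mu]: the stated
   primitive is differentiated termwise, and its derivative equals [K mu] precisely because
   [F = 2F1(1 - 1/sigma, 1; 2 - beta; z)] satisfies the hypergeometric equation
   [z (1 - z) F' + (1 - beta) (F - 1) = (1 - 1/sigma) z F] at [z = - alpha sigma q]. *)

From Stdlib Require Import Reals Arith Lra.
From Coquelicot Require Import Coquelicot.
Open Scope R_scope.

Lemma poch_1 n : poch 1 n = INR (fact n).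
Proof.
  induction n as [|n IH]; simpl poch; [reflexivity|].
  rewrite IH, fact_simpl, mult_INR, S_INR; ring.
Qed.

Lemma poch_gt0 c n : 0 < c -> 0 < poch c n.
Proof.
  intros Hc; induction n as [|n IH]; simpl poch; [lra|].
  pose proof (pos_INR n); apply Rmult_lt_0_compat; lra.
Qed.

Lemma Rabs_poch_le a n : Rabs (poch a n) <= poch (Rabs a + 1) n.
Proof.
  induction n as [|n IH]; simpl poch; [rewrite Rabs_R1; lra|].
  rewrite Rabs_mult; apply Rmult_le_compat; try apply Rabs_pos; [exact IH|].
  pose proof (pos_INR n); pose proof (Rabs_triang a (INR n)).
  rewrite (Rabs_right (INR n)) in *; lra.
Qed.

Lemma CV_radius_le_Rabs (a b : nat -> R) :
  (forall n, Rabs (a n) <= Rabs (b n)) -> Rbar_le (CV_radius b) (CV_radius a).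
Proof.
  intros Hab.
  destruct (CV_radius_bounded a) as [Ha _].
  destruct (CV_radius_bounded b) as [_ Hb].
  apply Hb; intros r [M HM]; apply Ha; exists M; intros n.
  eapply Rle_trans; [|apply HM].
  rewrite !Rabs_mult; apply Rmult_le_compat_r; [apply Rabs_pos | apply Hab].
Qed.

(* The coefficients of [hyp2F1 a 1 c] as a power series: the factor [(1)_n] cancels [n!]. *)
Definition hyp2F1_b1_coef (a c : R) (n : nat) : R := poch a n / poch c n.

Lemma hyp2F1_b1_PSeries a c z :
  0 < c -> hyp2F1 a 1 c z = PSeries (hyp2F1_b1_coef a c) z.
Proof.
  intros Hc; apply Series_ext; intros n.
  rewrite poch_1; unfold hyp2F1_b1_coef.
  pose proof (poch_gt0 c n Hc); pose proof (INR_fact_neq_0 n).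
  field; lra.
Qed.

Lemma hyp2F1_b1_coef_S a c n : 0 < c ->
  hyp2F1_b1_coef a c (S n) * (c + INR n) = hyp2F1_b1_coef a c n * (a + INR n).
Proof.
  intros Hc; unfold hyp2F1_b1_coef; simpl poch.
  pose proof (poch_gt0 c n Hc); pose proof (pos_INR n).
  field; lra.
Qed.

Lemma is_lim_seq_shift_ratio A c : 0 < c ->
  is_lim_seq (fun n => (A + INR n) / (c + INR n)) 1.
Proof.
  intros Hc.
  apply is_lim_seq_ext with (fun n => 1 + (A - c) * / (c + INR n)).
  { intros n; pose proof (pos_INR n); field; lra. }
  replace (Finite 1) with (Finite (1 + (A - c) * 0)) by (f_equal; ring).
  apply is_lim_seq_plus'; [apply is_lim_seq_const|].
  change (Finite ((A - c) * 0)) with (Rbar_mult (A - c) 0).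
  apply is_lim_seq_scal_l.
  change (Finite 0) with (Rbar_inv p_infty).
  apply is_lim_seq_inv; [|discriminate].
  apply is_lim_seq_plus with (l1 := c) (l2 := p_infty);
    [apply is_lim_seq_const | apply is_lim_seq_INR | reflexivity].
Qed.

Lemma CV_radius_hyp2F1_b1_coef a c :
  0 < c -> Rbar_le 1 (CV_radius (hyp2F1_b1_coef a c)).
Proof.
  intros Hc.
  set (A := Rabs a + 1).
  assert (HA : 0 < A) by (unfold A; pose proof (Rabs_pos a); lra).
  assert (Hcoef : forall n, 0 < hyp2F1_b1_coef A c n).
  { intros n; apply Rdiv_lt_0_compat; apply poch_gt0; assumption. }
  replace (Finite 1) with (CV_radius (hyp2F1_b1_coef A c)).
  - apply CV_radius_le_Rabs; intros n.
    specialize (Hcoef n); rewrite (Rabs_right _ (Rle_ge _ _ (Rlt_le _ _ Hcoef))).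
    unfold hyp2F1_b1_coef.
    pose proof (poch_gt0 c n Hc); pose proof (poch_gt0 A n HA).
    rewrite Rabs_div, (Rabs_right (poch c n)) by lra.
    apply Rmult_le_compat_r; [left; apply Rinv_0_lt_compat; lra | apply Rabs_poch_le].
  - rewrite (CV_radius_finite_DAlembert _ 1); [now rewrite Rinv_1 | | lra |].
    + intros n; specialize (Hcoef n); lra.
    + apply is_lim_seq_ext with (fun n => (A + INR n) / (c + INR n));
        [|now apply is_lim_seq_shift_ratio].
      intros n; pose proof (Hcoef n); pose proof (Hcoef (S n)).
      rewrite Rabs_right by (apply Rle_ge, Rlt_le, Rdiv_lt_0_compat; lra).
      unfold hyp2F1_b1_coef; simpl poch.
      pose proof (poch_gt0 c n Hc); pose proof (poch_gt0 A n HA); pose proof (pos_INR n).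
      field; lra.
Qed.

Lemma Rabs_lt_CV_radius_hyp2F1_b1_coef a c z :
  0 < c -> Rabs z < 1 -> Rbar_lt (Rabs z) (CV_radius (hyp2F1_b1_coef a c)).
Proof.
  intros Hc Hz; apply Rbar_lt_le_trans with 1; [exact Hz|].
  now apply CV_radius_hyp2F1_b1_coef.
Qed.

Lemma is_derive_hyp2F1_b1 a c z : 0 < c -> Rabs z < 1 ->
  is_derive (hyp2F1 a 1 c) z (PSeries (PS_derive (hyp2F1_b1_coef a c)) z).
Proof.
  intros Hc Hz.
  apply is_derive_ext with (PSeries (hyp2F1_b1_coef a c)).
  { intros t; symmetry; now apply hyp2F1_b1_PSeries. }
  now apply is_derive_PSeries, Rabs_lt_CV_radius_hyp2F1_b1_coef.
Qed.

(* Coefficientwise, after dividing by [z], this is the recurrence [hyp2F1_b1_coef_S]. *)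
Lemma hyp2F1_b1_ode a c z : 0 < c -> Rabs z < 1 ->
  z * (1 - z) * Derive (hyp2F1 a 1 c) z + (c - 1) * (hyp2F1 a 1 c z - 1)
  = a * z * hyp2F1 a 1 c z.
Proof.
  intros Hc Hz.
  set (g := hyp2F1_b1_coef a c).
  rewrite (is_derive_unique _ _ _ (is_derive_hyp2F1_b1 a c z Hc Hz)),
    (hyp2F1_b1_PSeries a c z Hc).
  fold g; set (F := PSeries g z); set (D := PSeries (PS_derive g) z).
  assert (HR := Rabs_lt_CV_radius_hyp2F1_b1_coef a c z Hc Hz); fold g in HR.
  assert (HF : is_series (fun n => g n * z ^ n) F)
    by now apply Series_correct, ex_series_Rabs, CV_disk_inside.
  assert (HD : is_series (fun n => PS_derive g n * z ^ n) D).
  { apply Series_correct, ex_series_Rabs, CV_disk_inside.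
    now rewrite CV_radius_derive. }
  assert (HF1 : is_series (fun n => g (S n) * z ^ S n) (F - 1)).
  { apply (is_series_incr_1 (fun n => g n * z ^ n)).
    match goal with |- is_series _ ?l => replace l with F; [exact HF|] end.
    unfold g, hyp2F1_b1_coef, plus; simpl; field. }
  assert (HnF : is_series (fun n => INR n * g n * z ^ n) (z * D)).
  { apply is_series_decr_1.
    match goal with |- is_series _ ?l => replace l with (z * D)
      by (unfold plus, opp; simpl; ring) end.
    assert (HzD : is_series (fun n => z * (PS_derive g n * z ^ n)) (z * D))
      by exact (is_series_scal_l z _ _ HD).
    apply is_series_ext with (2 := HzD).
    intros n; unfold PS_derive; simpl; ring. }
  assert (Hlhs : is_series
      (fun n => z * (PS_derive g n * z ^ n) + (c - 1) * (g (S n) * z ^ S n))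
      (z * D + (c - 1) * (F - 1)))
    by exact (is_series_plus _ _ _ _ (is_series_scal_l z _ _ HD)
                (is_series_scal_l (c - 1) _ _ HF1)).
  assert (Hrhs : is_series
      (fun n => z * (a * (g n * z ^ n)) + z * (INR n * g n * z ^ n))
      (z * (a * F) + z * (z * D)))
    by exact (is_series_plus _ _ _ _
                (is_series_scal_l z _ _ (is_series_scal_l a _ _ HF))
                (is_series_scal_l z _ _ HnF)).
  enough (z * D + (c - 1) * (F - 1) = z * (a * F) + z * (z * D)) by lra.
  rewrite <- (is_series_unique _ _ Hlhs); apply is_series_unique.
  apply is_series_ext with (2 := Hrhs); intros n.
  unfold PS_derive; rewrite S_INR; simpl pow.
  (* The equation lives in the normed-module carrier, which [ring] does not recognize. *)
  lazymatch goal with |- ?x = ?y => change (@eq R x y) end.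
  transitivity (z * z ^ n * (g n * (a + INR n))); [ring|].
  unfold g; rewrite <- hyp2F1_b1_coef_S by exact Hc; ring.
Qed.

Lemma in_open_interval_locally a b q :
  in_open_interval a b q -> locally q (in_open_interval a b).
Proof.
  apply (locally_open (T := R_UniformSpace) (in_open_interval a b)); [|easy].
  apply open_and; [apply open_Rbar_gt | apply open_Rbar_lt].
Qed.

Lemma in_open_interval_between a b p r y :
  in_open_interval a b p -> in_open_interval a b r -> p <= y <= r ->
  in_open_interval a b y.
Proof.
  intros [Hap _] [_ Hrb] Hy; split.
  - apply Rbar_lt_le_trans with p; [exact Hap | simpl; lra].
  - apply Rbar_le_lt_trans with r; [simpl; lra | exact Hrb].
Qed.

Lemma in_open_interval_gt0 a b q :
  Rbar_le 0 a -> in_open_interval a b q -> 0 < q.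
Proof. intros Ha [Haq _]; exact (Rbar_le_lt_trans 0 a q Ha Haq). Qed.

Lemma in_open_interval_inhabited a b :
  Rbar_lt a b -> exists q, in_open_interval a b q.
Proof.
  destruct a as [a| |], b as [b| |]; simpl; intros Hab; try tauto.
  - exists ((a + b) / 2); split; simpl; lra.
  - exists (a + 1); split; simpl; lra.
  - exists (b - 1); split; simpl; lra.
  - exists 0; split; exact I.
Qed.

Lemma is_derive_0_in_open_interval_const a b (f : R -> R) p r :
  (forall y, in_open_interval a b y -> is_derive f y 0) ->
  in_open_interval a b p -> in_open_interval a b r -> f p = f r.
Proof.
  intros Hf Hp Hr.
  assert (HJ : forall y, Rmin p r <= y <= Rmax p r -> in_open_interval a b y).
  { intros y Hy; destruct (Rle_dec p r).
    - rewrite Rmin_left, Rmax_right in Hy by lra.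
      now apply in_open_interval_between with p r.
    - rewrite Rmin_right, Rmax_left in Hy by lra.
      now apply in_open_interval_between with r p. }
  destruct (MVT_gen f p r (fun _ => 0)) as [c [_ Hc]].
  - intros x Hx; apply Hf, HJ; lra.
  - intros x Hx; apply continuity_pt_filterlim,
      (ex_derive_continuous (K := R_AbsRing) (V := R_NormedModule)).
    exists 0; now apply Hf, HJ.
  - lra.
Qed.

Section LFRRA.
Variables alpha beta sigma : R.

Definition marginal_utility (q : R) : R :=
  Rpower (1 + alpha * sigma * q) (beta - 1 / sigma) * Rpower q (- beta).

Lemma marginal_utility_gt0 q : 0 < marginal_utility q.
Proof. apply Rmult_lt_0_compat; apply exp_pos. Qed.

Hypothesis sigma_neq0 : sigma <> 0.

Lemma is_derive_marginal_utility q : 0 < q -> 0 < 1 + alpha * sigma * q ->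
  is_derive marginal_utility q
    (- ((alpha * q + beta) / (alpha * sigma * q + 1)) * marginal_utility q / q).
Proof.
  intros Hq Hs; unfold marginal_utility, Rpower; auto_derive.
  - repeat split; lra.
  - field; repeat split; lra.
Qed.

Variables a b : Rbar.
Hypotheses (a_ge0 : Rbar_le 0 a)
  (J_bounds : forall q, in_open_interval a b q ->
     0 < 1 + alpha * sigma * q /\ Rabs (alpha * sigma * q) < 1).

Lemma lfrra_of_Derive_marginal_utility (u : R -> R) K : 0 < K ->
  (forall q, in_open_interval a b q -> Derive u q = K * marginal_utility q) ->
  forall q, in_open_interval a b q ->
    - (q * Derive (Derive u) q) / Derive u q
    = (alpha * q + beta) / (alpha * sigma * q + 1).
Proof.
  intros HK Hu' q Hq.
  assert (Hq0 := in_open_interval_gt0 a b q a_ge0 Hq).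
  destruct (J_bounds q Hq) as [Hs _].
  rewrite (Derive_ext_loc (Derive u) (fun y => K * marginal_utility y)).
  2: exact (filter_imp _ _ Hu' (in_open_interval_locally a b q Hq)).
  rewrite Derive_scal, (is_derive_unique _ _ _ (is_derive_marginal_utility q Hq0 Hs)),
    (Hu' q Hq).
  pose proof (marginal_utility_gt0 q); field; repeat split; lra.
Qed.

Lemma Derive_marginal_utility_of_lfrra (u : R -> R) :
  Rbar_lt a b ->
  (forall q, in_open_interval a b q -> ex_derive (Derive u) q) ->
  (forall q, in_open_interval a b q -> 0 < Derive u q) ->
  (forall q, in_open_interval a b q ->
     - (q * Derive (Derive u) q) / Derive u q
     = (alpha * q + beta) / (alpha * sigma * q + 1)) ->
  exists K, 0 < K /\
    forall q, in_open_interval a b q -> Derive u q = K * marginal_utility q.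
Proof.
  intros Hab Hu'' Hu' Hrra.
  set (w := fun y => Derive u y / marginal_utility y).
  assert (Hw : forall y, in_open_interval a b y -> is_derive w y 0).
  { intros y Hy.
    assert (Hy0 := in_open_interval_gt0 a b y a_ge0 Hy).
    destruct (J_bounds y Hy) as [Hs _].
    set (r := (alpha * y + beta) / (alpha * sigma * y + 1)).
    assert (Hu2 : Derive (Derive u) y = - r * Derive u y / y).
    { unfold r; rewrite <- (Hrra y Hy); specialize (Hu' y Hy); field; lra. }
    replace 0 with ((Derive (Derive u) y * marginal_utility y
                     - Derive u y * (- r * marginal_utility y / y))
                    / marginal_utility y ^ 2).
    - apply is_derive_div;
        [now apply Derive_correct, Hu'' | now apply is_derive_marginal_utility
        | apply Rgt_not_eq, marginal_utility_gt0].
    - rewrite Hu2; pose proof (marginal_utility_gt0 y); field; lra. }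
  destruct (in_open_interval_inhabited a b Hab) as [q0 Hq0].
  exists (w q0); split.
  - apply Rdiv_lt_0_compat; [now apply Hu' | apply marginal_utility_gt0].
  - intros q Hq.
    rewrite (is_derive_0_in_open_interval_const a b w q0 q Hw Hq0 Hq).
    unfold w; pose proof (marginal_utility_gt0 q); field; lra.
Qed.

Hypotheses (beta_bounds : 0 < beta < 1) (sigma_neq1 : sigma <> 1).

Definition lfrra_utility (K C q : R) : R :=
  K * sigma / (sigma - 1)
    * Rpower (1 + alpha * sigma * q) (beta - 1 / sigma)
    * Rpower q (1 - beta)
    * (1 + (beta - 1 / sigma) / (1 - beta)
           * hyp2F1 (1 - 1 / sigma) 1 (2 - beta) (- (alpha * sigma * q)))
  + C.

Lemma is_derive_lfrra_utility K C q :
  0 < q -> 0 < 1 + alpha * sigma * q -> Rabs (alpha * sigma * q) < 1 ->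
  is_derive (lfrra_utility K C) q (K * marginal_utility q).
Proof.
  intros Hq Hs Hz.
  rewrite <- Rabs_Ropp in Hz.
  assert (Hc : 0 < 2 - beta) by lra.
  assert (Hode := hyp2F1_b1_ode (1 - 1 / sigma) (2 - beta) _ Hc Hz).
  unfold lfrra_utility, marginal_utility, Rpower; auto_derive.
  - repeat split; try lra.
    exists (PSeries (PS_derive (hyp2F1_b1_coef (1 - 1 / sigma) (2 - beta)))
              (- (alpha * sigma * q))).
    now apply is_derive_hyp2F1_b1.
  - change (Derive (fun x => hyp2F1 (1 - 1 / sigma) 1 (2 - beta) x))
      with (Derive (hyp2F1 (1 - 1 / sigma) 1 (2 - beta))).
    replace (exp ((1 - beta) * ln q)) with (q * exp (- beta * ln q))
      by (rewrite <- (exp_ln q Hq) at 1; rewrite <- exp_plus; f_equal; ring).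
    set (F := hyp2F1 (1 - 1 / sigma) 1 (2 - beta) (- (alpha * sigma * q))) in *.
    set (D := Derive (hyp2F1 (1 - 1 / sigma) 1 (2 - beta)) (- (alpha * sigma * q))) in *.
    set (E := exp ((beta - 1 / sigma) * ln (1 + alpha * sigma * q))).
    set (Q := exp (- beta * ln q)).
    (* The two sides differ by a multiple of the hypergeometric equation [Hode]. *)
    apply Rminus_diag_uniq.
    transitivity (K * sigma / (sigma - 1) * E * Q * (beta - 1 / sigma)
                  / ((1 - beta) * (1 + alpha * sigma * q))
                  * (- (alpha * sigma * q) * (1 - - (alpha * sigma * q)) * D
                     + (2 - beta - 1) * (F - 1)
                     - (1 - 1 / sigma) * - (alpha * sigma * q) * F)).
    + field; repeat split; lra.
    + rewrite Hode; ring.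
Qed.

Lemma Derive_lfrra_utility (u : R -> R) K C :
  (forall q, in_open_interval a b q -> u q = lfrra_utility K C q) ->
  forall q, in_open_interval a b q -> Derive u q = K * marginal_utility q.
Proof.
  intros Hu q Hq.
  rewrite (Derive_ext_loc u (lfrra_utility K C)).
  - destruct (J_bounds q Hq) as [Hs Hz].
    apply is_derive_unique, is_derive_lfrra_utility;
      [eapply in_open_interval_gt0; eauto | exact Hs | exact Hz].
  - exact (filter_imp _ _ Hu (in_open_interval_locally a b q Hq)).
Qed.

Lemma lfrra_utility_of_Derive (u : R -> R) K :
  Rbar_lt a b ->
  (forall q, in_open_interval a b q -> ex_derive u q) ->
  (forall q, in_open_interval a b q -> Derive u q = K * marginal_utility q) ->
  exists C, forall q, in_open_interval a b q -> u q = lfrra_utility K C q.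
Proof.
  intros Hab Hu Hu'.
  set (h := fun y => u y - lfrra_utility K 0 y).
  assert (Hh : forall y, in_open_interval a b y -> is_derive h y 0).
  { intros y Hy; destruct (J_bounds y Hy) as [Hs Hz].
    replace 0 with (Derive u y - K * marginal_utility y) by (rewrite Hu'; auto; ring).
    apply (is_derive_minus u (lfrra_utility K 0)); [now apply Derive_correct, Hu|].
    apply is_derive_lfrra_utility; [eapply in_open_interval_gt0; eauto | exact Hs | exact Hz]. }
  destruct (in_open_interval_inhabited a b Hab) as [q0 Hq0].
  exists (h q0); intros q Hq.
  rewrite (is_derive_0_in_open_interval_const a b h q0 q Hh Hq0 Hq).
  unfold h, lfrra_utility; ring.
Qed.

End LFRRA.

Theorem theorem1 (alpha beta sigma : R) (a b : Rbar) (u : R -> R) :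
  0 < beta < 1 ->
  sigma <> 0 -> sigma <> 1 ->
  Rbar_lt a b ->
  Rbar_le (Finite 0) a ->
  (forall q, in_open_interval a b q ->
     0 < 1 + alpha * sigma * q /\ Rabs (alpha * sigma * q) < 1) ->
  (forall q, in_open_interval a b q ->
     ex_derive u q /\ ex_derive (Derive u) q) ->
  (forall q, in_open_interval a b q -> 0 < Derive u q) ->
  ((forall q, in_open_interval a b q ->
      - (q * Derive (Derive u) q) / Derive u q
        = (alpha * q + beta) / (alpha * sigma * q + 1))
   <->
   (exists K C : R, 0 < K /\
      forall q, in_open_interval a b q ->
        u q = K * sigma / (sigma - 1)
                * Rpower (1 + alpha * sigma * q) (beta - 1 / sigma)
                * Rpower q (1 - beta)
                * (1 + (beta - 1 / sigma) / (1 - beta)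
                       * hyp2F1 (1 - 1 / sigma) 1 (2 - beta) (- (alpha * sigma * q)))
              + C))
  /\
  (forall K C : R, 0 < K ->
     (forall q, in_open_interval a b q ->
        u q = K * sigma / (sigma - 1)
                * Rpower (1 + alpha * sigma * q) (beta - 1 / sigma)
                * Rpower q (1 - beta)
                * (1 + (beta - 1 / sigma) / (1 - beta)
                       * hyp2F1 (1 - 1 / sigma) 1 (2 - beta) (- (alpha * sigma * q)))
              + C) ->
     forall q, in_open_interval a b q ->
       Derive u q = K * Rpower (1 + alpha * sigma * q) (beta - 1 / sigma)
                      * Rpower q (- beta)).
Proof.
  intros Hbeta Hsigma0 Hsigma1 Hab Ha HJ Hu Hu'.
  split; [split|].
  - intros Hrra.
    destruct (Derive_marginal_utility_of_lfrra _ _ _ Hsigma0 _ _ Ha HJ u Hab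
                (fun q Hq => proj2 (Hu q Hq)) Hu' Hrra) as [K [HK HuK]].
    destruct (lfrra_utility_of_Derive _ _ _ Hsigma0 _ _ Ha HJ Hbeta Hsigma1 u K Hab
                (fun q Hq => proj1 (Hu q Hq)) HuK) as [C HC].
    now exists K, C.
  - intros [K [C [HK HuKC]]].
    apply (lfrra_of_Derive_marginal_utility _ _ _ Hsigma0 _ _ Ha HJ u K HK).
    exact (Derive_lfrra_utility _ _ _ Hsigma0 _ _ Ha HJ Hbeta Hsigma1 u K C HuKC).
  - intros K C HK HuKC q Hq.
    rewrite (Derive_lfrra_utility _ _ _ Hsigma0 _ _ Ha HJ Hbeta Hsigma1 u K C HuKC q Hq).
    unfold marginal_utility; ring.
Qed.
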